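(* Assume $b_1<n^*$ and $b_2<m^*$. Then every Nash equilibrium $(\sigma^{1*},\sigma^{2*})$ of $\Gamma(b_1,b_2)$ satisfies $|S|=b_1$ for all $S$ in the support of $\sigma^{1*}$ and $|T|=b_2$ for all $T$ in the support of $\sigma^{2*}$. Moreover, with $\overline{\mathcal A_1}=\{S\subseteq\mathcal V:|S|=b_1\}$ and $\overline{\mathcal A_2}=\{T\subseteq\mathcal E:|T|=b_2\}$, a strategy profile $(\sigma^1,\sigma^2)$ is a Nash equilibrium of $\Gamma(b_1,b_2)$ if and only if $\sigma^1\in\Delta(\overline{\mathcal A_1})$ is an optimal solution of $\max_{\sigma^1\in\Delta(\overline{\mathcal A_1})}\min_{T\in\overline{\mathcal A_2}}U_1(\sigma^1,T)$ and $\sigma^2\in\Delta(\overline{\mathcal A_2})$ is an optimal solution of $\min_{\sigma^2\in\Delta(\overline{\mathcal A_2})}\max_{S\in\overline{\mathcal A_1}}U_1(S,\sigma^2)$.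
   Context: Detection model: finite nonempty sets $\mathcal V$, $\mathcal E$, monitoring sets $\mathcal C_i\subseteq\mathcal E$ ($i\in\mathcal V$) with every $e\in\mathcal E$ in some $\mathcal C_i$; $\mathcal C_S=\bigcup_{i\in S}\mathcal C_i$; $F(S,T)=|\mathcal C_S\cap T|$. Set cover: $S\subseteq\mathcal V$ with $\mathcal C_S=\mathcal E$; $n^*$ = minimum size of a set cover. Set packing: $T\subseteq\mathcal E$ with $|\mathcal C_i\cap T|\le1$ for all $i$; $m^*$ = maximum size of a set packing. Game $\Gamma(b_1,b_2)$ ($b_1,b_2$ positive integers): $\mathcal A_1=\{S\subseteq\mathcal V:|S|\le b_1\}$, $\mathcal A_2=\{T\subseteq\mathcal E:|T|\le b_2\}$; mixed strategies $\sigma^1\in\Delta(\mathcal A_1)$, $\sigma^2\in\Delta(\mathcal A_2)$ (independent randomizations); payoffs $U_1(\sigma^1,\sigma^2)=\mathbb E[F(S,T)]$ and $U_2(\sigma^1,\sigma^2)=\mathbb E[|T|]-\mathbb E[F(S,T)]$; pure actions identified with point masses. A Nash equilibrium is a profile $(\sigma^{1*},\sigma^{2*})$ with $U_1(\sigma^{1*},\sigma^{2*})\ge U_1(\sigma^1,\sigma^{2*})$ for all $\sigma^1$ and $U_2(\sigma^{1*},\sigma^{2*})\ge U_2(\sigma^{1*},\sigma^2)$ for all $\sigma^2$. Distributions on $\overline{\mathcal A_j}\subseteq\mathcal A_j$ are viewed as elements of $\Delta(\mathcal A_j)$. *)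

From HB Require Import structures.
From mathcomp Require Import all_boot all_order all_algebra.
Set Implicit Arguments. Unset Strict Implicit. Unset Printing Implicit Defensive.
Import Order.TTheory GRing.Theory Num.Theory.
Local Open Scope ring_scope.

Section Detection.
Variables (R : realFieldType) (V E : finType) (C : V -> {set E}).

Definition CS (S : {set V}) : {set E} := \bigcup_(i in S) C i.
Definition Fdet (S : {set V}) (T : {set E}) : nat := #|CS S :&: T|.

Definition set_cover (S : {set V}) : bool := CS S == [set: E].
Definition set_packing (T : {set E}) : bool := [forall i, #|C i :&: T| <= 1]%N.
(* n* : minimum size of a set cover (V itself is a cover under the standing
   assumption, so the default #|V| is harmless) *)
Definition nstar : nat := \big[minn/#|V|]_(S : {set V} | set_cover S) #|S|.
Definition mstar : nat := \max_(T : {set E} | set_packing T) #|T|.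

Definition in_Delta (X : finType) (A : pred X) (s : {ffun X -> R}) : Prop :=
  (forall x, 0 <= s x) /\ \sum_x s x = 1 /\ (forall x, s x != 0 -> A x).

Definition pure (X : finType) (x : X) : {ffun X -> R} := [ffun y => (y == x)%:R].

Definition A1 (b1 : nat) : pred {set V} := fun S => (#|S| <= b1)%N.
Definition A2 (b2 : nat) : pred {set E} := fun T => (#|T| <= b2)%N.
Definition A1bar (b1 : nat) : pred {set V} := fun S => #|S| == b1.
Definition A2bar (b2 : nat) : pred {set E} := fun T => #|T| == b2.

Definition U1 (s1 : {ffun {set V} -> R}) (s2 : {ffun {set E} -> R}) : R :=
  \sum_S \sum_T s1 S * s2 T * (Fdet S T)%:R.
Definition U2 (s1 : {ffun {set V} -> R}) (s2 : {ffun {set E} -> R}) : R :=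
  \sum_S \sum_T s1 S * s2 T * ((#|T|)%:R - (Fdet S T)%:R).

Definition nash (b1 b2 : nat) s1 s2 : Prop :=
  in_Delta (A1 b1) s1 /\ in_Delta (A2 b2) s2 /\
  (forall s1', in_Delta (A1 b1) s1' -> U1 s1' s2 <= U1 s1 s2) /\
  (forall s2', in_Delta (A2 b2) s2' -> U2 s1 s2' <= U2 s1 s2).

(* s1 is optimal for  max_{s in Δ(A1bar)} min_{T in A2bar} U1(s,T):
   for every competitor s1', min_T U1(s1',T) <= min_T U1(s1,T), i.e. some
   T' in A2bar has U1(s1',T') below every U1(s1,T), T in A2bar. *)
Definition maxmin_opt (b1 b2 : nat) s1 : Prop :=
  in_Delta (A1bar b1) s1 /\
  forall s1', in_Delta (A1bar b1) s1' ->
    exists2 T', A2bar b2 T' &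
      forall T, A2bar b2 T -> U1 s1' (pure T') <= U1 s1 (pure T).

Definition minmax_opt (b1 b2 : nat) s2 : Prop :=
  in_Delta (A2bar b2) s2 /\
  forall s2', in_Delta (A2bar b2) s2' ->
    exists2 S', A1bar b1 S' &
      forall S, A1bar b1 S -> U1 (pure S) s2 <= U1 (pure S') s2'.

End Detection.

(* An equilibrium sensor support set S with #|S| < b1 must catch every
   attacked edge, otherwise adding a node that monitors an attacked edge
   outside C_S pays; then the attacker gains nothing, yet, as #|S| < n^*,
   S misses some edge and attacking that edge alone gains.  If an attacker support
   set leaves budget unused, every edge monitored with probability < 1 lies in
   every attacker support set (otherwise adding it, or swapping it for a
   surely monitored edge, pays), so it is attacked with probability 1.  For a
   sensor support set S, a maximum packing of m^* > b2 edges then caps the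
   detection at #|S| - 1, while replacing any node of S by one monitoring an
   edge outside C_S yields detection at least #|S|.
   With full budgets U2 = b2 - U1, so the game is zero-sum and its equilibria
   are the pairs of optimal strategies by von Neumann's minimax theorem,
   obtained from Gordan's alternative by Fourier-Motzkin elimination. *)

From HB Require Import structures.
From mathcomp Require Import all_boot all_order all_algebra.
From mathcomp Require Import ring lra zify.
Import Order.TTheory GRing.Theory Num.Theory.
Local Open Scope ring_scope.
Set Implicit Arguments. Unset Strict Implicit. Unset Printing Implicit Defensive.

Section Alternatives.
Variable R : realFieldType.

Lemma addr_pmul_lt0 (a d t : R) : 0 < a -> t < - d / a -> d + a * t < 0.
Proof. by move=> a_gt0; rewrite ltr_pdivlMr // => ?; lra. Qed.

Lemma addr_nmul_lt0 (a d t : R) : a < 0 -> - d / a < t -> d + a * t < 0.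
Proof. by move=> a_lt0; rewrite ltr_ndivrMr // => ?; lra. Qed.

Lemma ndivr_lt_pdivr (a b d e : R) :
  0 < a -> b < 0 -> a * d - b * e < 0 -> - d / b < - e / a.
Proof.
move=> a_gt0 b_lt0 h; rewrite ltr_ndivrMr // mulrAC ltr_pdivrMr //; nra.
Qed.

Lemma exists_lt_seq (U : seq R) : exists t, forall u, u \in U -> t < u.
Proof.
elim: U => [|u U [t tU]]; first by exists 0.
exists (Num.min t (u - 1)) => v; rewrite inE => /predU1P [-> | /tU vU].
  by rewrite gt_min; apply/orP; right; lra.
by rewrite gt_min vU.
Qed.

Lemma exists_between_seq1 (l : R) (U : seq R) :
  (forall u, u \in U -> l < u) -> exists2 t, l < t & forall u, u \in U -> t < u.
Proof.
elim: U => [|u U IH] lU; first by exists (l + 1) => //; lra.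
have [t lt tU] : exists2 t, l < t & forall v, v \in U -> t < v.
  by apply: IH => v vU; apply: lU; rewrite inE vU orbT.
have lu : l < u := lU u (mem_head u U).
exists (Num.min t ((l + u) / 2)); first by rewrite lt_min lt; lra.
move=> v; rewrite inE => /predU1P [-> | /tU vU].
  by rewrite gt_min; apply/orP; right; lra.
by rewrite gt_min vU.
Qed.

Lemma exists_between_seq (L U : seq R) :
  (forall l u, l \in L -> u \in U -> l < u) ->
  exists2 t, (forall l, l \in L -> l < t) & forall u, u \in U -> t < u.
Proof.
elim: L => [|l L IH] LU.
  by have [t tU] := exists_lt_seq U; exists t.
have [t Lt tU] : exists2 t, (forall l', l' \in L -> l' < t) & forall u, u \in U -> t < u.
  by apply: IH => l' u lL; apply: LU; rewrite inE lL orbT.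
have [t' lt' t'U] := exists_between_seq1 (fun u uU => LU l u (mem_head l L) uU).
exists (Num.max t t') => [v | u uU]; last by rewrite gt_max tU // t'U.
by rewrite inE lt_max => /predU1P [-> | /Lt ->]; rewrite ?lt' ?orbT.
Qed.

Lemma sum_pure_mul (X : finType) (x : X) (F : X -> R) :
  \sum_y pure R x y * F y = F x.
Proof.
rewrite (bigD1 x) //= ffunE eqxx mul1r big1 ?addr0 // => y /negbTE yx.
by rewrite ffunE yx mul0r.
Qed.

Definition dotn (n : nat) (r y : nat -> R) := \sum_(k < n) r k * y k.

Section FourierMotzkin.
Variables (I : finType) (a : I -> nat -> R) (n : nat).

(* One elimination step on coordinate n: the rows with a zero n-th entry, and
   for every pair p, q with a p n > 0 > a q n the combination
   a p n * a q - a q n * a p, whose n-th entry vanishes. *)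
Definition fm_index : finType :=
  ({i | a i n == 0} + {i | 0 < a i n} * {i | a i n < 0})%type.

Definition fm_weight (j : fm_index) (i : I) : R :=
  match j with
  | inl z => pure R (sval z) i
  | inr pq => a (sval pq.1) n * pure R (sval pq.2) i
              - a (sval pq.2) n * pure R (sval pq.1) i
  end.

Definition fm_row (j : fm_index) (k : nat) := \sum_i fm_weight j i * a i k.

Lemma fm_weight_sum (j : fm_index) (F : I -> R) :
  \sum_i fm_weight j i * F i =
  match j with
  | inl z => F (sval z)
  | inr pq => a (sval pq.1) n * F (sval pq.2) - a (sval pq.2) n * F (sval pq.1)
  end.
Proof.
case: j => [z | [p q]] /=; first exact: sum_pure_mul.
under eq_bigr => i _ do rewrite mulrBl -!mulrA.
by rewrite sumrB -!mulr_sumr !sum_pure_mul.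
Qed.

Lemma fm_weight_ge0 j i : 0 <= fm_weight j i.
Proof.
rewrite /fm_weight /pure; case: j => [z | [p q]] /=; rewrite !ffunE; first exact: ler0n.
have := svalP p; have := svalP q; rewrite /= => hq hp.
by case: (i == sval q); case: (i == sval p); rewrite /= ?mulr1 ?mulr0; lra.
Qed.

Lemma fm_row_last j : fm_row j n = 0.
Proof.
rewrite /fm_row fm_weight_sum; case: j => [z | [p q]] /=; last by rewrite mulrC subrr.
exact/eqP/(svalP z).
Qed.

Lemma fm_solution_lift (y : nat -> R) :
  (forall j, dotn n (fm_row j) y < 0) ->
  exists y' : nat -> R, forall i, dotn n.+1 (a i) y' < 0.
Proof.
move=> hy; pose d i := dotn n (a i) y.
have fm_dot j : dotn n (fm_row j) y = \sum_i fm_weight j i * d i.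
  rewrite /dotn /d /fm_row; under eq_bigr => k _ do rewrite mulr_suml.
  rewrite exchange_big /=; apply: eq_bigr => i _.
  by rewrite mulr_sumr; apply: eq_bigr => k _; rewrite mulrA.
pose L := [seq - d i / a i n | i <- enum I & a i n < 0].
pose U := [seq - d i / a i n | i <- enum I & 0 < a i n].
have [t Lt tU] : exists2 t, (forall l, l \in L -> l < t) & forall u, u \in U -> t < u.
  apply: exists_between_seq => l u /mapP [q]; rewrite mem_filter => /andP [hq _] ->.
  move=> /mapP [p]; rewrite mem_filter => /andP [hp _] ->.
  apply: ndivr_lt_pdivr => //.
  by have := hy (inr (exist _ p hp, exist _ q hq)); rewrite fm_dot fm_weight_sum.
exists (fun k => if k == n then t else y k) => i.
rewrite /dotn big_ord_recr /= eqxx.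
rewrite [X in X + _](_ : _ = d i); last by apply: eq_bigr => k _ /=; rewrite ltn_eqF.
case: (ltrgtP (a i n) 0) => ain.
- apply: addr_nmul_lt0 => //; apply: Lt; apply/mapP.
  by exists i; rewrite // mem_filter ain mem_enum.
- apply: addr_pmul_lt0 => //; apply: tU; apply/mapP.
  by exists i; rewrite // mem_filter ain mem_enum.
- have ain0 : a i n == 0 by rewrite ain.
  by have := hy (inl (exist _ i ain0)); rewrite fm_dot fm_weight_sum /= ain mul0r addr0.
Qed.

Lemma fm_multiplier_lift (w : fm_index -> R) :
  (forall j, 0 <= w j) -> (exists j, 0 < w j) ->
  (forall k, (k < n)%N -> \sum_j w j * fm_row j k = 0) ->
  exists w' : I -> R, [/\ forall i, 0 <= w' i, exists i, 0 < w' i &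
    forall k, (k < n.+1)%N -> \sum_i w' i * a i k = 0].
Proof.
move=> w_ge0 [j0 wj0] wk.
have ww_ge0 i : 0 <= \sum_j w j * fm_weight j i.
  by apply: sumr_ge0 => j _; apply: mulr_ge0 => //; exact: fm_weight_ge0.
exists (fun i => \sum_j w j * fm_weight j i); split => //.
  have [i0 hi0] : exists i0, 0 < fm_weight j0 i0.
    rewrite /fm_weight; case: j0 {wj0} => [z | [p q]] /=.
      by exists (sval z); rewrite ffunE eqxx ltr01.
    have := svalP p; have := svalP q; rewrite /= => hq hp.
    exists (sval q); rewrite !ffunE eqxx mulr1.
    have -> : (sval q == sval p) = false by apply/eqP => qp; move: hp; rewrite -qp; lra.
    by rewrite mulr0 subr0.
  exists i0; rewrite (bigD1 j0) //=; apply: ltr_pwDl; first exact: mulr_gt0.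
  by apply: sumr_ge0 => j _; apply: mulr_ge0 => //; exact: fm_weight_ge0.
move=> k k_le_n; have -> : \sum_i (\sum_j w j * fm_weight j i) * a i k =
    \sum_j w j * fm_row j k.
  under eq_bigr => i _ do rewrite mulr_suml.
  rewrite exchange_big /=; apply: eq_bigr => j _.
  by rewrite /fm_row mulr_sumr; apply: eq_bigr => i _; rewrite mulrA.
move: k_le_n; rewrite ltnS leq_eqVlt => /predU1P [-> | /wk //].
by apply: big1 => j _; rewrite fm_row_last mulr0.
Qed.

End FourierMotzkin.

Lemma gordan_alternative n (I : finType) (a : I -> nat -> R) :
  (exists y : nat -> R, forall i, dotn n (a i) y < 0) \/
  (exists w : I -> R, [/\ forall i, 0 <= w i, exists i, 0 < w i &
     forall k, (k < n)%N -> \sum_i w i * a i k = 0]).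
Proof.
elim: n I a => [|n IH] I a.
  case: (pickP (@predT I)) => [i0 _ | I0]; last by left; exists (fun=> 0) => i; have := I0 i.
  right; exists (pure R i0); split=> // [i | ]; first by rewrite ffunE ler0n.
  by exists i0; rewrite ffunE eqxx ltr01.
have [[y hy] | [w [w_ge0 w_pos wk]]] := IH _ (@fm_row _ a n).
  by left; exact: fm_solution_lift hy.
by right; exact: fm_multiplier_lift w_ge0 w_pos wk.
Qed.

Section Minimax.
Variables (X Y : finType) (P : pred X) (Q : pred Y) (g : X -> Y -> R) (c : R) (y0 : Y).
Hypothesis Qy0 : Q y0.

Local Notation n := (size (enum Q)).
Local Notation col k := (nth y0 (enum Q) k).

(* Rows inl i carry the gap g i (col k) - c for i in P and the constant -1
   for i outside P, so that no multiplier can sit on rows outside P; rows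
   inr k force coordinate k to be positive. *)
Definition minimax_row (r : X + 'I_n) (k : nat) : R :=
  match r with
  | inl i => if P i then g i (col k) - c else -1
  | inr k0 => - (k == k0)%:R
  end.

Lemma sum_index_enum (F : nat -> R) :
  \sum_j (if Q j then F (index j (enum Q)) else 0) = \sum_(k < n) F k.
Proof.
rewrite -big_mkcond /= -big_enum (big_nth y0) big_mkord.
by apply: eq_bigr => k _; rewrite index_uniq // enum_uniq.
Qed.

Lemma index_enum_lt j : Q j -> (index j (enum Q) < n)%N.
Proof. by move=> Qj; rewrite index_mem mem_enum. Qed.

Lemma dotn_minimax_row_inr (y : nat -> R) (k0 : 'I_n) :
  dotn n (minimax_row (inr k0)) y = - y k0.
Proof.
rewrite /dotn (bigD1 k0) //= eqxx mulN1r big1 ?addr0 // => k kk0.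
by rewrite (negbTE (kk0 : (k : nat) != k0)) oppr0 mul0r.
Qed.

Lemma minimax_col_of_solution (y : nat -> R) :
  (forall r, dotn n (minimax_row r) y < 0) ->
  exists z : Y -> R, [/\ forall j, 0 <= z j, \sum_j z j = 1,
    forall j, z j != 0 -> Q j & forall i, P i -> \sum_j g i j * z j < c].
Proof.
move=> hy.
have y_gt0 k : (k < n)%N -> 0 < y k.
  by move=> kn; have := hy (inr (Ordinal kn)); rewrite dotn_minimax_row_inr; lra.
set s := \sum_(k < n) y k.
have s_gt0 : 0 < s.
  have y0n := index_enum_lt Qy0.
  rewrite /s (bigD1 (Ordinal y0n)) //=; apply: ltr_pwDl; first exact: y_gt0.
  by apply: sumr_ge0 => k _; exact/ltW/y_gt0.
exists (fun j => if Q j then y (index j (enum Q)) / s else 0); split.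
- move=> j; case: ifP => // Qj; apply: divr_ge0; last exact: ltW.
  exact/ltW/y_gt0/index_enum_lt.
- by rewrite (sum_index_enum (fun k => y k / s)) -mulr_suml divff ?gt_eqF.
- by move=> j; case: ifP => //; rewrite eqxx.
move=> i Pi.
rewrite (eq_bigr (fun j => if Q j then
  g i (col (index j (enum Q))) * y (index j (enum Q)) / s else 0)); last first.
  move=> j _; case: ifP => Qj; last by rewrite mulr0.
  by rewrite nth_index ?mem_enum // mulrA.
rewrite (sum_index_enum (fun k => g i (col k) * y k / s)) -mulr_suml ltr_pdivrMr //.
have := hy (inl i); rewrite /dotn /= Pi.
under eq_bigr => k _ do rewrite mulrBl.
by rewrite sumrB -mulr_sumr -/s; lra.
Qed.

Lemma minimax_row_of_multiplier (w : X + 'I_n -> R) :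
  (forall r, 0 <= w r) -> (exists r, 0 < w r) ->
  (forall k, (k < n)%N -> \sum_r w r * minimax_row r k = 0) ->
  exists x : X -> R, [/\ forall i, 0 <= x i, \sum_i x i = 1,
    forall i, x i != 0 -> P i & forall j, Q j -> c <= \sum_i x i * g i j].
Proof.
move=> w_ge0 [r0 wr0] wk.
set W := \sum_(i | P i) w (inl i).
set M := \sum_(i | ~~ P i) w (inl i).
pose G k := \sum_(i | P i) w (inl i) * g i (col k).
have w_inr (k0 : 'I_n) : w (inr k0) = G k0 - c * W - M.
  have := wk k0 (ltn_ord k0); rewrite big_sumType /= [X in _ + X](bigD1 k0) //= eqxx mulrN1.
  rewrite [X in _ + (_ + X)]big1 => [|k kk0]; last first.
    by rewrite eq_sym (negbTE (kk0 : (k : nat) != k0)) oppr0 mulr0.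
  rewrite (bigID P) /= (eq_bigr (fun i => w (inl i) * (g i (col k0) - c))) => [|i /= -> //].
  rewrite (eq_bigr (fun i => - w (inl i)) (P := fun i => ~~ P i)); last first.
    by move=> i /= /negbTE ->; rewrite mulrN1.
  under eq_bigr => i _ do rewrite mulrBr.
  by rewrite sumrB sumrN -mulr_suml mulrC -/M -/W /G; lra.
have W_ge0 : 0 <= W by apply: sumr_ge0 => i _.
have M_ge0 : 0 <= M by apply: sumr_ge0 => i _.
have W_gt0 : 0 < W.
  rewrite lt_def W_ge0 andbT; apply/eqP => W0.
  have wP : forall i, P i -> w (inl i) = 0 := psumr_eq0P (fun j _ => w_ge0 (inl j)) W0.
  have G0 k : G k = 0 by apply: big1 => i /wP ->; rewrite mul0r.
  have M0 : M = 0.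
    have := w_ge0 (inr (Ordinal (index_enum_lt Qy0))).
    by rewrite w_inr G0 W0; lra.
  have wnP : forall i, ~~ P i -> w (inl i) = 0 := psumr_eq0P (fun j _ => w_ge0 (inl j)) M0.
  move: wr0; case: r0 => [i | k0]; last by rewrite w_inr G0 W0 M0; lra.
  by case: (boolP (P i)) => [/wP | /wnP] ->; rewrite ltxx.
exists (fun i => if P i then w (inl i) / W else 0); split.
- by move=> i; case: ifP => // _; apply: divr_ge0.
- by rewrite -big_mkcond -mulr_suml divff ?gt_eqF.
- by move=> i; case: ifP => //; rewrite eqxx.
move=> j Qj; have jn := index_enum_lt Qj.
have := w_ge0 (inr (Ordinal jn)); rewrite w_inr /G /= nth_index ?mem_enum // => Gj.
rewrite (eq_bigr (fun i => if P i then w (inl i) * g i j / W else 0)); last first.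
  by move=> i _; case: ifP; rewrite ?mul0r // mulrAC.
by rewrite -big_mkcond -mulr_suml ler_pdivlMr //; lra.
Qed.

Lemma minimax_alternative :
  (exists x : X -> R, [/\ forall i, 0 <= x i, \sum_i x i = 1,
     forall i, x i != 0 -> P i & forall j, Q j -> c <= \sum_i x i * g i j]) \/
  (exists z : Y -> R, [/\ forall j, 0 <= z j, \sum_j z j = 1,
     forall j, z j != 0 -> Q j & forall i, P i -> \sum_j g i j * z j < c]).
Proof.
have [[y hy] | [w [w_ge0 w_pos wk]]] := gordan_alternative n minimax_row.
  by right; exact: minimax_col_of_solution hy.
by left; exact: minimax_row_of_multiplier w_ge0 w_pos wk.
Qed.

End Minimax.
End Alternatives.

Section Averages.
Variables (R : realFieldType) (X : finType) (x : X -> R).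
Hypotheses (x_ge0 : forall a, 0 <= x a) (x_sum1 : \sum_a x a = 1).

Lemma avg_subr (h : X -> R) v : \sum_a x a * h a - v = \sum_a x a * (h a - v).
Proof.
under [RHS]eq_bigr => a _ do rewrite mulrBr.
by rewrite sumrB -mulr_suml x_sum1 mul1r.
Qed.

Lemma avg_le (h : X -> R) v : (forall a, x a != 0 -> h a <= v) -> \sum_a x a * h a <= v.
Proof.
move=> hv; rewrite -subr_le0 avg_subr; apply: sumr_le0 => a _.
have [-> | /hv hav] := eqVneq (x a) 0; first by rewrite mul0r.
by rewrite mulr_ge0_le0 // subr_le0.
Qed.

Lemma avg_ge (h : X -> R) v : (forall a, x a != 0 -> v <= h a) -> v <= \sum_a x a * h a.
Proof.
move=> hv; rewrite -lerN2 -sumrN.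
by under eq_bigr => a _ do rewrite -mulrN; apply: avg_le => a /hv; rewrite lerN2.
Qed.

Lemma avg_eq (h : X -> R) v : (forall a, x a != 0 -> h a = v) -> \sum_a x a * h a = v.
Proof. by move=> hv; apply/eqP; rewrite eq_le avg_le ?avg_ge // => a /hv ->. Qed.

Lemma avg_eq_supp (h : X -> R) v : (forall a, x a != 0 -> h a <= v) ->
  \sum_a x a * h a = v -> forall a, x a != 0 -> h a = v.
Proof.
move=> hv avg_v a xa.
have terms_ge0 b : true -> 0 <= x b * (v - h b).
  have [-> | /hv hb] := eqVneq (x b) 0; first by rewrite mul0r.
  by rewrite mulr_ge0 // subr_ge0.
have sum0 : \sum_b x b * (v - h b) = 0.
  rewrite -[LHS]opprK -sumrN (eq_bigr _ (fun b _ => esym (mulrN _ _))).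
  by under eq_bigr => b _ do rewrite opprB; rewrite -avg_subr avg_v subrr oppr0.
move: (psumr_eq0P terms_ge0 sum0 (i := a) isT) => /eqP.
by rewrite mulf_eq0 (negbTE xa) subr_eq0 => /eqP.
Qed.

Lemma avg_lt (h : X -> R) v : (forall a, x a != 0 -> h a < v) -> \sum_a x a * h a < v.
Proof.
move=> hv; have [a0 /andP [_ xa0]] : exists a, true && (0 < x a).
  by apply: psumr_neq0P => //; rewrite x_sum1; exact/eqP/oner_neq0.
rewrite -subr_lt0 avg_subr (bigD1 a0) //=.
have term_a0 : x a0 * (h a0 - v) < 0 by rewrite pmulr_rlt0 // subr_lt0 hv ?gt_eqF.
suff : \sum_(a | a != a0) x a * (h a - v) <= 0 by lra.
apply: sumr_le0 => a _; have [-> | /hv hav] := eqVneq (x a) 0; first by rewrite mul0r.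
by rewrite mulr_ge0_le0 // subr_le0 ltW.
Qed.

Lemma avg_ge_supp (h : X -> R) v :
  v <= \sum_a x a * h a -> exists2 a, x a != 0 & v <= h a.
Proof.
move=> v_le_avg; apply/exists_inP; apply: contraLR v_le_avg => /exists_inPn hv.
by rewrite -ltNge; apply: avg_lt => a /hv; rewrite -ltNge.
Qed.

Lemma avg_le_supp (h : X -> R) v :
  \sum_a x a * h a <= v -> exists2 a, x a != 0 & h a <= v.
Proof.
move=> avg_le_v; have [|a xa] := @avg_ge_supp (fun a => - h a) (- v).
  by rewrite (eq_bigr _ (fun a _ => mulrN _ _)) sumrN lerN2.
by rewrite lerN2; exists a.
Qed.

End Averages.

Section SetSums.
Variables (R : realFieldType) (X : finType).

Lemma natr_card_setI (A B : {set X}) :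
  (#|A :&: B|)%:R = \sum_(x in A) (x \in B)%:R :> R.
Proof.
rewrite -sum1_card natr_sum [LHS]big_mkcond [RHS]big_mkcond /=.
by apply: eq_bigr => x _; rewrite inE; case: (x \in A); case: (x \in B).
Qed.

Lemma ler_sum_subset (h : X -> R) (A B : {set X}) :
  (forall x, 0 <= h x) -> A \subset B -> \sum_(x in A) h x <= \sum_(x in B) h x.
Proof.
move=> h_ge0 AB; rewrite [X in _ <= X](big_setID A) /= (setIidPr AB) lerDl.
exact: sumr_ge0.
Qed.

Lemma ler_sum_subsetU1 (h : X -> R) (A B : {set X}) x0 :
  (forall x, 0 <= h x) -> A \subset B -> x0 \in B -> x0 \notin A ->
  \sum_(x in A) h x + h x0 <= \sum_(x in B) h x.
Proof.
move=> h_ge0 AB x0B x0A; rewrite addrC -big_setU1 //=.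
by apply: ler_sum_subset => //; rewrite subUset sub1set x0B.
Qed.

End SetSums.

Lemma exists_superset_card (X : finType) (A : {set X}) n :
  (#|A| <= n <= #|X|)%N -> exists2 B : {set X}, A \subset B & #|B| = n.
Proof.
move=> /andP [An nX]; rewrite -(subnKC An) in nX *.
move: (n - #|A|)%N nX => k; elim: k A {An} => [|k IH] A AkX.
  by exists A; rewrite ?addn0.
have [x _ xA] : exists2 x, x \in [set: X] & x \notin A.
  by apply/subsetPn; rewrite subTset; apply/eqP => AT; move: AkX; rewrite AT cardsT; lia.
have [|B AxB cardB] := IH (x |: A); first by rewrite cardsU1 xA; lia.
exists B; last by rewrite cardsU1 xA in cardB; lia.
exact: subset_trans (subsetUr [set x] A) AxB.
Qed.

Section CoverPacking.
Variables (V E : finType) (C : V -> {set E}).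

Lemma mem_CS (S : {set V}) i e : i \in S -> e \in C i -> e \in CS C S.
Proof. by move=> iS ei; apply/bigcupP; exists i. Qed.

Lemma CS_subset (S S' : {set V}) : S \subset S' -> CS C S \subset CS C S'.
Proof.
move=> /subsetP SS'; apply/subsetP => e /bigcupP [i iS ei].
exact: mem_CS (SS' i iS) ei.
Qed.

Lemma nstar_le_cover S : set_cover C S -> (nstar C <= #|S|)%N.
Proof.
move=> coverS; have := bigmin_le_cond #|V| (fun S : {set V} => #|S|) coverS.
by rewrite minEnat leEnat.
Qed.

Lemma exists_uncovered (S : {set V}) :
  (#|S| < nstar C)%N -> exists e, e \notin CS C S.
Proof.
move=> Sn; have [coverS | ] := boolP (set_cover C S).
  by move: Sn; rewrite ltnNge nstar_le_cover.
by rewrite /set_cover eqEsubset subsetT /= => /subsetPn [e _ eS]; exists e.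
Qed.

Lemma nstar_le_card : (forall e, exists i, e \in C i) -> (nstar C <= #|V|)%N.
Proof.
move=> hcov; rewrite -cardsT; apply: nstar_le_cover; apply/eqP/setP => e.
by have [i ei] := hcov e; rewrite in_setT (mem_CS (in_setT i) ei).
Qed.

Lemma exists_max_packing : exists2 P, set_packing C P & #|P| = mstar C.
Proof.
have : (0 < #|[pred T | set_packing C T]|)%N.
  apply/card_gt0P; exists set0; rewrite inE /set_packing.
  by apply/forallP => i; rewrite setI0 cards0.
move=> /(eq_bigmax_cond (fun T : {set E} => #|T|)) [P PP mP].
by exists P => //; rewrite /mstar mP.
Qed.

Lemma mstar_le_card : (mstar C <= #|E|)%N.
Proof. by have [P _ <-] := exists_max_packing; exact: max_card. Qed.

Lemma card_packing_CS P S : set_packing C P -> (#|P :&: CS C S| <= #|S|)%N.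
Proof.
move=> /forallP packP; rewrite /CS -(sum1_card (mem S)).
elim/big_ind2: _ => [|A m B m' Am Bm'|i _]; first by rewrite setI0 cards0.
  by rewrite setIUr (leq_trans (leq_card_setU _ _).1) ?leq_add.
by rewrite setIC.
Qed.

Lemma card_CS_setI_lt (P : {set E}) (S : {set V}) (T : {set E}) :
  set_packing C P -> (#|T| < #|P|)%N -> P :\: CS C S \subset T ->
  (#|CS C S :&: T| < #|S|)%N.
Proof.
move=> packP TP PT; have PS := card_packing_CS S packP.
have PT' : P :\: CS C S \subset T :\: CS C S.
  apply/subsetP => e ePS; have := subsetP PT e ePS.
  by move: ePS; rewrite !inE => /andP [-> _].
have := subset_leq_card PT'; have := cardsID (CS C S) P; have := cardsID (CS C S) T.
by rewrite [T :&: _]setIC [P :&: _]setIC in PS *; lia.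
Qed.

Lemma sum_CS_setD1 (R : realFieldType) (h : E -> R) (S : {set V}) :
  (forall e, 0 <= h e) ->
  (#|S|%:R - 1) * \sum_(e in CS C S) h e <= \sum_(j in S) \sum_(e in CS C (S :\ j)) h e.
Proof.
move=> h_ge0; rewrite mulr_sumr.
under [X in _ <= X]eq_bigr => j _ do rewrite big_mkcond /=.
rewrite exchange_big /= [leLHS]big_mkcond /=; apply: ler_sum => e _.
case: ifPn => [/bigcupP [k kS ek] | _]; last by apply: sumr_ge0 => j _; case: ifP.
(* every j other than the witness k still covers e through k *)
have -> : #|S|%:R - 1 = \sum_(j in S) (1 - (j == k)%:R) :> R.
  by rewrite sumrB sumr_const (bigD1 k) //= eqxx big1 ?addr0 // => j /andP [_ /negbTE ->].
rewrite mulr_suml; apply: ler_sum => j jS; have [-> | jk] := eqVneq j k.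
  by rewrite subrr mul0r; case: ifP.
by rewrite subr0 mul1r (mem_CS (i := k)) // !inE kS eq_sym jk.
Qed.

End CoverPacking.

Lemma pure_in_Delta (R : realFieldType) (X : finType) (A : pred X) x :
  A x -> in_Delta A (pure R x).
Proof.
move=> Ax; split=> [y | ]; first by rewrite ffunE ler0n.
split=> [ | y].
  by rewrite -(sum_pure_mul x (fun=> 1)); apply: eq_bigr => y _; rewrite mulr1.
by rewrite ffunE; have [-> | _] := eqVneq y x; rewrite ?eqxx.
Qed.

Lemma ffun_in_Delta (R : realFieldType) (X : finType) (A : pred X) (x : X -> R) :
  [/\ forall a, 0 <= x a, \sum_a x a = 1 & forall a, x a != 0 -> A a] ->
  in_Delta A [ffun a => x a].
Proof.
move=> [x_ge0 x_sum1 x_supp]; split=> [a|]; first by rewrite ffunE.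
split=> [|a]; last by rewrite ffunE => /x_supp.
by rewrite -x_sum1; apply: eq_bigr => a _; rewrite ffunE.
Qed.

Lemma in_Delta_sub (X : finType) (R : realFieldType) (A B : pred X) (s : {ffun X -> R}) :
  {subset A <= B} -> in_Delta A s -> in_Delta B s.
Proof. by move=> AB [s_ge0 [s_sum1 s_supp]]; split=> //; split=> // x /s_supp /AB. Qed.

Lemma in_Delta_A1bar (R : realFieldType) (V : finType) b (s : {ffun {set V} -> R}) :
  in_Delta (A1bar b) s -> in_Delta (A1 b) s.
Proof. by apply: in_Delta_sub => S; rewrite !unfold_in /A1bar /A1 => /eqP ->. Qed.

Lemma in_Delta_A2bar (R : realFieldType) (E : finType) b (s : {ffun {set E} -> R}) :
  in_Delta (A2bar b) s -> in_Delta (A2 b) s.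
Proof. by apply: in_Delta_sub => T; rewrite !unfold_in /A2bar /A2 => /eqP ->. Qed.

Section Payoffs.
Variables (R : realFieldType) (V E : finType) (C : V -> {set E}).

Definition cover_prob (s1 : {ffun {set V} -> R}) e := \sum_S s1 S * (e \in CS C S)%:R.
Definition attack_prob (s2 : {ffun {set E} -> R}) e := \sum_T s2 T * (e \in T)%:R.

Lemma U1_pureL S (s2 : {ffun {set E} -> R}) :
  U1 C (pure R S) s2 = \sum_T s2 T * (Fdet C S T)%:R.
Proof.
rewrite /U1 -(sum_pure_mul S (fun S' => \sum_T s2 T * (Fdet C S' T)%:R)).
by apply: eq_bigr => S' _; rewrite mulr_sumr; apply: eq_bigr => T _; rewrite mulrA.
Qed.

Lemma U1_pureR (s1 : {ffun {set V} -> R}) T :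
  U1 C s1 (pure R T) = \sum_S s1 S * (Fdet C S T)%:R.
Proof.
apply: eq_bigr => S _.
rewrite -(sum_pure_mul T (fun T' => s1 S * (Fdet C S T')%:R)).
by apply: eq_bigr => T' _; rewrite mulrCA mulrA.
Qed.

Lemma U1_sumL s1 (s2 : {ffun {set E} -> R}) : U1 C s1 s2 = \sum_S s1 S * U1 C (pure R S) s2.
Proof.
apply: eq_bigr => S _; rewrite U1_pureL mulr_sumr.
by apply: eq_bigr => T _; rewrite mulrA.
Qed.

Lemma U1_sumR (s1 : {ffun {set V} -> R}) s2 : U1 C s1 s2 = \sum_T s2 T * U1 C s1 (pure R T).
Proof.
rewrite {1}/U1 exchange_big; apply: eq_bigr => T _ /=.
by rewrite U1_pureR mulr_sumr; apply: eq_bigr => S _; rewrite mulrCA mulrA.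
Qed.

Lemma U2_sumR (s1 : {ffun {set V} -> R}) s2 : U2 C s1 s2 = \sum_T s2 T * U2 C s1 (pure R T).
Proof.
rewrite {1}/U2 exchange_big; apply: eq_bigr => T _ /=; rewrite /U2 mulr_sumr.
apply: eq_bigr => S _; rewrite (bigD1 T) //= big1 => [|T' T'T].
  by rewrite ffunE eqxx mulr1n mulr1 addr0 mulrCA mulrA.
by rewrite ffunE (negbTE T'T) mulr0 mul0r.
Qed.

Lemma U2_eq_sub (s1 : {ffun {set V} -> R}) s2 : \sum_S s1 S = 1 ->
  U2 C s1 s2 = \sum_T s2 T * (#|T|)%:R - U1 C s1 s2.
Proof.
move=> s1_sum1; rewrite U1_sumR /U2 exchange_big -sumrB; apply: eq_bigr => T _ /=.
rewrite U1_pureR mulr_sumr -[X in X * _ - _]mul1r -s1_sum1 !mulr_suml -sumrB.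
by apply: eq_bigr => S _; ring.
Qed.

Lemma U2_pureR (s1 : {ffun {set V} -> R}) T : \sum_S s1 S = 1 ->
  U2 C s1 (pure R T) = (#|T|)%:R - U1 C s1 (pure R T).
Proof. by move=> s1_sum1; rewrite U2_eq_sub // sum_pure_mul. Qed.

Lemma U1_pureL_attack_prob S s2 :
  U1 C (pure R S) s2 = \sum_(e in CS C S) attack_prob s2 e.
Proof.
rewrite U1_pureL; under eq_bigr => T _ do rewrite natr_card_setI mulr_sumr.
by rewrite exchange_big; apply: eq_bigr => e _; apply: eq_bigr => T _; rewrite mulrC.
Qed.

Lemma U1_pureR_cover_prob s1 T :
  U1 C s1 (pure R T) = \sum_(e in T) cover_prob s1 e.
Proof.
rewrite U1_pureR; under eq_bigr => S _ do rewrite /Fdet setIC natr_card_setI mulr_sumr.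
by rewrite exchange_big; apply: eq_bigr => e _; apply: eq_bigr => S _; rewrite mulrC.
Qed.

Lemma sum_attack_prob s2 : \sum_e attack_prob s2 e = \sum_T s2 T * (#|T|)%:R.
Proof.
rewrite exchange_big; apply: eq_bigr => T _ /=; rewrite -sum1_card natr_sum mulr_sumr.
by rewrite [RHS]big_mkcond; apply: eq_bigr => e _; case: (e \in T); rewrite ?mulr0 ?mulr1.
Qed.

Section Distribution.
Variables (s1 : {ffun {set V} -> R}).
Hypotheses (s1_ge0 : forall S, 0 <= s1 S) (s1_sum1 : \sum_S s1 S = 1).

Lemma one_sub_cover_prob e : 1 - cover_prob s1 e = \sum_S s1 S * (e \notin CS C S)%:R.
Proof.
rewrite -[X in X - _]s1_sum1 -sumrB; apply: eq_bigr => S _.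
by case: (e \in CS C S); rewrite /= ?mulr0 ?mulr1 ?subr0 ?subrr.
Qed.

Lemma cover_prob_le1 e : cover_prob s1 e <= 1.
Proof.
by rewrite -subr_ge0 one_sub_cover_prob; apply: sumr_ge0 => S _; rewrite mulr_ge0.
Qed.

Lemma cover_prob_lt1 S e : s1 S != 0 -> e \notin CS C S -> cover_prob s1 e < 1.
Proof.
move=> s1S eS; rewrite -subr_gt0 one_sub_cover_prob (bigD1 S) //= eS mulr1.
rewrite ltr_pwDl //; first by rewrite lt_def s1S s1_ge0.
by apply: sumr_ge0 => S' _; rewrite mulr_ge0.
Qed.

Lemma U2_pureR_cover_prob T : U2 C s1 (pure R T) = \sum_(e in T) (1 - cover_prob s1 e).
Proof.
by rewrite U2_pureR // U1_pureR_cover_prob sumrB -sum1_card natr_sum.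
Qed.

Lemma U2_pureR_subset (T T' : {set E}) :
  T \subset T' -> U2 C s1 (pure R T) <= U2 C s1 (pure R T').
Proof.
move=> TT'; rewrite !U2_pureR_cover_prob; apply: ler_sum_subset => // e.
by rewrite subr_ge0 cover_prob_le1.
Qed.

End Distribution.

Lemma attack_prob_ge0 (s2 : {ffun {set E} -> R}) e :
  (forall T, 0 <= s2 T) -> 0 <= attack_prob s2 e.
Proof. by move=> s2_ge0; apply: sumr_ge0 => T _; rewrite mulr_ge0. Qed.

Lemma U1_pureL_subset (s2 : {ffun {set E} -> R}) (S S' : {set V}) :
  (forall T, 0 <= s2 T) -> S \subset S' ->
  U1 C (pure R S) s2 <= U1 C (pure R S') s2.
Proof.
move=> s2_ge0 SS'; rewrite !U1_pureL_attack_prob; apply: ler_sum_subset.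
  by move=> e; exact: attack_prob_ge0.
exact: CS_subset.
Qed.

Lemma U2_A2bar b (s1 : {ffun {set V} -> R}) s2 :
  \sum_S s1 S = 1 -> in_Delta (A2bar b) s2 -> U2 C s1 s2 = b%:R - U1 C s1 s2.
Proof.
move=> s1_sum1 [s2_ge0 [s2_sum1 s2_supp]]; rewrite U2_eq_sub //; congr (_ - _).
by apply: (avg_eq s2_ge0 s2_sum1) => T /s2_supp /eqP ->.
Qed.

End Payoffs.

Section Equilibrium.
Variables (R : realFieldType) (V E : finType) (C : V -> {set E}) (b1 b2 : nat).
Variables (s1 : {ffun {set V} -> R}) (s2 : {ffun {set E} -> R}).
Hypothesis NE : nash C b1 b2 s1 s2.

Let s1_ge0 : forall S, 0 <= s1 S := NE.1.1.
Let s1_sum1 : \sum_S s1 S = 1 := NE.1.2.1.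
Let s1_supp : forall S, s1 S != 0 -> (#|S| <= b1)%N := NE.1.2.2.
Let s2_ge0 : forall T, 0 <= s2 T := NE.2.1.1.
Let s2_sum1 : \sum_T s2 T = 1 := NE.2.1.2.1.
Let s2_supp : forall T, s2 T != 0 -> (#|T| <= b2)%N := NE.2.1.2.2.

Lemma sensor_best_response (S : {set V}) : (#|S| <= b1)%N -> U1 C (pure R S) s2 <= U1 C s1 s2.
Proof. by move=> Sb1; apply: NE.2.2.1; exact: pure_in_Delta. Qed.

Lemma attacker_best_response (T : {set E}) : (#|T| <= b2)%N -> U2 C s1 (pure R T) <= U2 C s1 s2.
Proof. by move=> Tb2; apply: NE.2.2.2; exact: pure_in_Delta. Qed.

Lemma sensor_supp_value (S : {set V}) : s1 S != 0 -> U1 C (pure R S) s2 = U1 C s1 s2.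
Proof.
move: S; apply: (avg_eq_supp s1_ge0 s1_sum1 (h := fun S => U1 C (pure R S) s2)).
  by move=> S /s1_supp /sensor_best_response.
by rewrite U1_sumL.
Qed.

Lemma attacker_supp_value (T : {set E}) : s2 T != 0 -> U2 C s1 (pure R T) = U2 C s1 s2.
Proof.
move: T; apply: (avg_eq_supp s2_ge0 s2_sum1 (h := fun T => U2 C s1 (pure R T))).
  by move=> T /s2_supp /attacker_best_response.
by rewrite U2_sumR.
Qed.

Definition uncertain : {set E} := [set e | cover_prob C s1 e < 1].

Lemma no_profitable_addition (T A T' : {set E}) e : s2 T != 0 -> (#|T'| <= b2)%N ->
  U2 C s1 (pure R A) = U2 C s1 (pure R T) -> A \subset T' -> e \in T' -> e \notin A ->
  1 <= cover_prob C s1 e.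
Proof.
move=> s2T T'b2 AT AT' eT' eA.
have p_le1 e' : 0 <= 1 - cover_prob C s1 e' by rewrite subr_ge0 cover_prob_le1.
have := ler_sum_subsetU1 p_le1 AT' eT' eA.
rewrite -!U2_pureR_cover_prob // AT (attacker_supp_value s2T).
by have := attacker_best_response T'b2; lra.
Qed.

Lemma uncertain_subset_short (T : {set E}) : s2 T != 0 -> (#|T| < b2)%N ->
  uncertain \subset T.
Proof.
move=> s2T Tb2; apply/subsetP => e; rewrite inE ltNge; apply: contraNT => eT.
apply: (no_profitable_addition s2T _ erefl (subsetUr [set e] T) (setU11 e T) eT).
by rewrite cardsU1 eT.
Qed.

Lemma uncertain_subset_supp (T0 T : {set E}) : s2 T0 != 0 -> (#|T0| < b2)%N ->
  s2 T != 0 -> uncertain \subset T.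
Proof.
move=> s2T0 T0b2 s2T; have [Tb2 | b2T] := ltnP #|T| b2.
  exact: uncertain_subset_short.
have U_T0 := subset_leq_card (uncertain_subset_short s2T0 T0b2).
(* a full support set has a surely monitored edge, which could be swapped *)
have [f fT fU] : exists2 f, f \in T & f \notin uncertain.
  by apply/subsetPn/negP => /subset_leq_card; lia.
have pf : cover_prob C s1 f = 1.
  by apply/eqP; rewrite eq_le cover_prob_le1 //=; move: fU; rewrite inE -leNgt.
have U2_Tf : U2 C s1 (pure R (T :\ f)) = U2 C s1 (pure R T).
  by rewrite !U2_pureR_cover_prob // [RHS](big_setD1 f fT) /= pf subrr add0r.
apply/subsetP => e; rewrite inE ltNge; apply: contraNT => eT.
apply: (no_profitable_addition s2T _ U2_Tf (subsetUr [set e] _) (setU11 e _)).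
  by have := s2_supp s2T; rewrite cardsU1 (cardsD1 f T) fT; case: (e \in T :\ f) => /=; lia.
by rewrite in_setD1 (negbTE eT) andbF.
Qed.

Lemma attack_prob_uncertain (T0 : {set E}) e : s2 T0 != 0 -> (#|T0| < b2)%N ->
  e \in uncertain -> attack_prob s2 e = 1.
Proof.
move=> s2T0 T0b2 eU; apply: (avg_eq s2_ge0 s2_sum1) => T s2T.
by rewrite (subsetP (uncertain_subset_supp s2T0 T0b2 s2T) e eU).
Qed.

Hypothesis hcov : forall e : E, exists i : V, e \in C i.

Lemma attack_prob_uncovered (S : {set V}) e : s1 S != 0 -> (#|S| < b1)%N ->
  e \notin CS C S -> attack_prob s2 e = 0.
Proof.
move=> s1S Sb1 eS; have [i ei] := hcov e.
have iSb1 : (#|i |: S| <= b1)%N by rewrite cardsU1; case: (i \in S) => /=; lia.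
have := ler_sum_subsetU1 (fun e => attack_prob_ge0 e s2_ge0)
  (CS_subset C (subsetUr [set i] S)) (mem_CS (setU11 i S) ei) eS.
rewrite -!U1_pureL_attack_prob (sensor_supp_value s1S).
have := sensor_best_response iSb1; have := attack_prob_ge0 e s2_ge0; lra.
Qed.

Lemma card_le_value (S : {set V}) y : s1 S != 0 -> y \notin CS C S ->
  attack_prob s2 y = 1 -> (#|S|)%:R <= U1 C s1 s2.
Proof.
move=> s1S yS qy; have [i yi] := hcov y.
have q_ge0 e : 0 <= attack_prob s2 e := attack_prob_ge0 e s2_ge0.
(* replacing any j of S by i keeps the size and picks up the edge y *)
have swap j : j \in S -> \sum_(e in CS C (S :\ j)) attack_prob s2 e + 1 <= U1 C s1 s2.
  move=> jS; apply: le_trans (sensor_best_response (S := i |: (S :\ j)) _).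
    rewrite -qy U1_pureL_attack_prob; apply: ler_sum_subsetU1 (mem_CS (setU11 i _) yi) _ => //.
      exact/CS_subset/subsetUr.
    by apply: contra yS; apply/subsetP/CS_subset/subsetDl.
  have := s1_supp s1S; rewrite cardsU1 (cardsD1 j S) jS.
  by case: (i \in S :\ j) => /=; lia.
have : \sum_(j in S) (\sum_(e in CS C (S :\ j)) attack_prob s2 e + 1) <=
    \sum_(j in S) U1 C s1 s2 by apply: ler_sum.
rewrite big_split /= !sumr_const -(mulr_natl (U1 C s1 s2)).
have := sum_CS_setD1 C S q_ge0; rewrite -U1_pureL_attack_prob (sensor_supp_value s1S).
rewrite mulrBl mul1r; lra.
Qed.

Hypothesis hm : (b2 < mstar C)%N.

Lemma value_le_card_sub1 (T0 : {set E}) (S : {set V}) : s2 T0 != 0 -> (#|T0| < b2)%N ->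
  s1 S != 0 -> U1 C s1 s2 <= (#|S|)%:R - 1.
Proof.
move=> s2T0 T0b2 s1S; have [P packP cardP] := exists_max_packing C.
rewrite -(sensor_supp_value s1S) U1_pureL; apply: (avg_le s2_ge0 s2_sum1) => T s2T.
rewrite lerBrDr natr1 ler_nat; apply: card_CS_setI_lt packP _ _.
  by rewrite cardP; exact: leq_ltn_trans (s2_supp s2T) hm.
apply/subsetP => e; rewrite inE => /andP [eS _].
apply: (subsetP (uncertain_subset_supp s2T0 T0b2 s2T)).
by rewrite inE (cover_prob_lt1 s1_ge0 s1_sum1 s1S eS).
Qed.

Hypothesis hn : (b1 < nstar C)%N.
Hypothesis hb2 : (0 < b2)%N.

Lemma nash_sensor_card (S : {set V}) : s1 S != 0 -> #|S| = b1.
Proof.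
move=> s1S; apply/eqP; rewrite eqn_leq s1_supp //= leqNgt; apply/negP => Sb1.
have U2_0 : U2 C s1 s2 = 0.
  rewrite U2_eq_sub // -sum_attack_prob -(sensor_supp_value s1S) U1_pureL_attack_prob.
  rewrite [X in X - _](bigID (mem (CS C S))) /= addrAC subrr add0r.
  by apply: big1 => e; exact: attack_prob_uncovered.
have [e eS] := exists_uncovered (ltn_trans Sb1 hn).
have := attacker_best_response (T := [set e]); rewrite cards1 U2_0 => /(_ hb2).
rewrite U2_pureR_cover_prob // big_set1 subr_le0 leNgt.
by rewrite (cover_prob_lt1 s1_ge0 s1_sum1 s1S eS).
Qed.

Lemma nash_attacker_card (T : {set E}) : s2 T != 0 -> #|T| = b2.
Proof.
move=> s2T; apply/eqP; rewrite eqn_leq s2_supp //= leqNgt; apply/negP => Tb2.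
have [S /andP [_ s1S_gt0]] : exists S, true && (0 < s1 S).
  by apply: psumr_neq0P => //; rewrite s1_sum1; exact/eqP/oner_neq0.
have s1S : s1 S != 0 by rewrite gt_eqF.
have [y yS] := exists_uncovered (leq_ltn_trans (s1_supp s1S) hn).
have yU : y \in uncertain by rewrite inE (cover_prob_lt1 s1_ge0 s1_sum1 s1S yS).
have := value_le_card_sub1 s2T Tb2 s1S.
by have := card_le_value s1S yS (attack_prob_uncertain s2T Tb2 yU); lra.
Qed.

Lemma nash_in_Delta_A1bar : in_Delta (A1bar b1) s1.
Proof. by split=> //; split=> // S /nash_sensor_card; rewrite /A1bar => ->. Qed.

Lemma nash_in_Delta_A2bar : in_Delta (A2bar b2) s2.
Proof. by split=> //; split=> // T /nash_attacker_card; rewrite /A2bar => ->. Qed.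

Lemma value_le_U1_pureR (T : {set E}) : #|T| = b2 -> U1 C s1 s2 <= U1 C s1 (pure R T).
Proof.
move=> Tb2; have := attacker_best_response (T := T); rewrite Tb2 leqnn => /(_ isT).
by rewrite U2_pureR // (U2_A2bar C s1_sum1 nash_in_Delta_A2bar) Tb2; lra.
Qed.

Lemma nash_maxmin_opt : maxmin_opt C b1 b2 s1.
Proof.
split=> [|s1' D1']; first exact: nash_in_Delta_A1bar.
have := NE.2.2.1 s1' (in_Delta_A1bar D1'); rewrite (U1_sumR C s1').
move=> /(avg_le_supp s2_ge0 s2_sum1) [T' s2T' leT'].
exists T' => [|T /eqP Tb2]; first by rewrite /A2bar nash_attacker_card.
exact: le_trans leT' (value_le_U1_pureR Tb2).
Qed.

Lemma nash_minmax_opt : minmax_opt C b1 b2 s2.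
Proof.
split=> [|s2' D2']; first exact: nash_in_Delta_A2bar.
have := NE.2.2.2 s2' (in_Delta_A2bar D2').
rewrite (U2_A2bar C s1_sum1 D2') (U2_A2bar C s1_sum1 nash_in_Delta_A2bar) lerD2l lerN2.
rewrite (U1_sumL C s1 s2') => /(avg_ge_supp s1_ge0 s1_sum1) [S' s1S' geS'].
exists S' => [|S /eqP Sb1]; first by rewrite /A1bar nash_sensor_card.
by apply: le_trans geS'; apply: sensor_best_response; rewrite Sb1.
Qed.

End Equilibrium.

Section Optimal.
Variables (R : realFieldType) (V E : finType) (C : V -> {set E}) (b1 b2 : nat).
Variables (s1 : {ffun {set V} -> R}) (s2 : {ffun {set E} -> R}).
Hypotheses (b1V : (b1 <= #|V|)%N) (b2E : (b2 <= #|E|)%N).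
Hypotheses (opt1 : maxmin_opt C b1 b2 s1) (opt2 : minmax_opt C b1 b2 s2).

Let s1_ge0 : forall S, 0 <= s1 S := opt1.1.1.
Let s1_sum1 : \sum_S s1 S = 1 := opt1.1.2.1.
Let s1_supp : forall S, s1 S != 0 -> #|S| == b1 := opt1.1.2.2.
Let s2_ge0 : forall T, 0 <= s2 T := opt2.1.1.
Let s2_sum1 : \sum_T s2 T = 1 := opt2.1.2.1.
Let s2_supp : forall T, s2 T != 0 -> #|T| == b2 := opt2.1.2.2.

(* v is the maxmin value; minimax_alternative rules out a gap with the minmax
   value, since a column strategy beating v would contradict opt2. *)
Lemma optimal_value : exists v : R,
  (forall S, A1bar b1 S -> U1 C (pure R S) s2 <= v) /\
  (forall T, A2bar b2 T -> v <= U1 C s1 (pure R T)).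
Proof.
have [Sb _ cardSb] : exists2 S : {set V}, set0 \subset S & #|S| = b1.
  by apply: exists_superset_card; rewrite cards0 b1V.
have [Tb _ cardTb] : exists2 T : {set E}, set0 \subset T & #|T| = b2.
  by apply: exists_superset_card; rewrite cards0 b2E.
have Sbb1 : A1bar b1 Sb by rewrite /A1bar cardSb.
have [S0 S0b1 S0max] := arg_maxP (fun S => U1 C (pure R S) s2) Sbb1.
exists (U1 C (pure R S0) s2); split=> [S /S0max // | ].
have Tb2 : A2bar b2 Tb by rewrite /A2bar cardTb.
have [[x [x_ge0 x_sum1 x_supp x_val]] | [z [z_ge0 z_sum1 z_supp z_val]]] :=
  minimax_alternative (A1bar b1) (fun S T => (Fdet C S T)%:R) (U1 C (pure R S0) s2) Tb2.
- have [T' T'b2 T'min] := opt1.2 _ (ffun_in_Delta (And3 x_ge0 x_sum1 x_supp)).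
  move=> T /T'min; apply: le_trans; apply: le_trans (x_val T' T'b2) _.
  by rewrite U1_pureR; under [leRHS]eq_bigr => S _ do rewrite ffunE.
- have [S' S'b1 S'max] := opt2.2 _ (ffun_in_Delta (And3 z_ge0 z_sum1 z_supp)).
  have := z_val S' S'b1; rewrite ltNge => /negP no_gap; exfalso; apply: no_gap.
  apply: le_trans (S'max S0 S0b1) _; rewrite U1_pureL.
  by under eq_bigr => T _ do rewrite ffunE mulrC.
Qed.

Lemma opt_nash : nash C b1 b2 s1 s2.
Proof.
have [v [v_ge v_le]] := optimal_value.
have value : U1 C s1 s2 = v.
  apply/eqP; rewrite eq_le; apply/andP; split.
    by rewrite U1_sumL; apply: (avg_le s1_ge0 s1_sum1) => S /s1_supp /v_ge.
  by rewrite U1_sumR; apply: (avg_ge s2_ge0 s2_sum1) => T /s2_supp /v_le.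
split; first exact: in_Delta_A1bar opt1.1.
split; first exact: in_Delta_A2bar opt2.1.
split=> [s1' [s1'_ge0 [s1'_sum1 s1'_supp]] | s2' [s2'_ge0 [s2'_sum1 s2'_supp]]].
  rewrite value U1_sumL; apply: (avg_le s1'_ge0 s1'_sum1) => S /s1'_supp.
  rewrite /A1 => Sb1.
  have [S' SS' S'b1] : exists2 S' : {set V}, S \subset S' & #|S'| = b1.
    by apply: exists_superset_card; rewrite Sb1 b1V.
  apply: le_trans (v_ge S' _); last by rewrite /A1bar S'b1.
  exact: U1_pureL_subset.
rewrite (U2_A2bar C s1_sum1 opt2.1) value U2_sumR.
apply: (avg_le s2'_ge0 s2'_sum1) => T /s2'_supp.
rewrite /A2 => Tb2.
have [T' TT' T'b2] : exists2 T' : {set E}, T \subset T' & #|T'| = b2.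
  by apply: exists_superset_card; rewrite Tb2 b2E.
apply: le_trans (U2_pureR_subset C s1_ge0 s1_sum1 TT') _.
rewrite U2_pureR // T'b2; have := v_le T'; rewrite /A2bar T'b2 eqxx; lra.
Qed.

End Optimal.

Unset Implicit Arguments.

Theorem proposition2 (R : realFieldType) (V E : finType) (C : V -> {set E})
  (hV : (0 < #|V|)%N) (hE : (0 < #|E|)%N)
  (hcov : forall e : E, exists i : V, e \in C i)
  (b1 b2 : nat) (hb1 : (0 < b1)%N) (hb2 : (0 < b2)%N)
  (hn : (b1 < nstar C)%N) (hm : (b2 < mstar C)%N) :
  (forall (s1 : {ffun {set V} -> R}) (s2 : {ffun {set E} -> R}),
     nash C b1 b2 s1 s2 ->
     (forall S, s1 S != 0 -> #|S| = b1) /\ (forall T, s2 T != 0 -> #|T| = b2)) /\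
  (forall (s1 : {ffun {set V} -> R}) (s2 : {ffun {set E} -> R}),
     in_Delta (A1 b1) s1 -> in_Delta (A2 b2) s2 ->
     (nash C b1 b2 s1 s2 <-> maxmin_opt C b1 b2 s1 /\ minmax_opt C b1 b2 s2)).
Proof.
have b1V : (b1 <= #|V|)%N := leq_trans (ltnW hn) (nstar_le_card hcov).
have b2E : (b2 <= #|E|)%N := leq_trans (ltnW hm) (mstar_le_card C).
split=> [s1 s2 NE | s1 s2 _ _].
  by split; [exact: nash_sensor_card NE hcov hn hb2 | exact: nash_attacker_card NE hcov hm hn].
split=> [NE | [opt1 opt2]]; last exact: opt_nash.
by split; [exact: nash_maxmin_opt NE hcov hm hn hb2 | exact: nash_minmax_opt NE hcov hm hn hb2].
Qed.
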